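(* Let $G,H,H'$ be graphs with $V(G)=V(H)=V(H')=\{1,\ldots,n\}$ and $E(G)\subseteq E(H)\subseteq E(H')$, and let $A\in\mathcal{S}(G)$ have the strong spectral property with respect to $H$. Then for every $\epsilon>0$ there is a matrix $A'\in\mathcal{S}^{\rm cl}(H')$ such that $\operatorname{spec}(A')=\operatorname{spec}(A)$, $\|A-A'\|<\epsilon$, $A'$ has the strong spectral property with respect to $H'$, and every entry $a'_{ij}$ of $A'$ with $\{i,j\}\in E(H')\setminus E(H)$ is nonzero.
   Context: For a graph $G$ on $\{1,\ldots,n\}$, $\mathcal{S}(G)$ is the set of $n\times n$ real symmetric matrices $A=(a_{ij})$ with, for $i\neq j$, $a_{ij}\neq0$ iff $\{i,j\}\in E(G)$; $\mathcal{S}^{\rm cl}(G)$ is the set of $n\times n$ real symmetric matrices whose $(i,j)$-entry, $i\neq j$, is nonzero only if $\{i,j\}\in E(G)$ (its closure). $\overline{H}$ denotes the complement graph of $H$. If $A\in\mathcal{S}(G)$ and $H$ is a graph on the same vertex set with $E(G)\subseteq E(H)$, then $A$ has the strong spectral property with respect to $H$ if the only real symmetric matrix $X$ with $X\in\mathcal{S}^{\rm cl}(\overline{H})$, $I\circ X=O$ and $AX-XA=O$ is $X=O$ ($\circ$ the entrywise product). $\|\cdot\|$ is any fixed norm on $n\times n$ matrices. *)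

From HB Require Import structures.
From mathcomp Require Import all_boot all_order all_algebra.
From mathcomp Require Import reals.
Set Implicit Arguments. Unset Strict Implicit. Unset Printing Implicit Defensive.
Import Order.TTheory GRing.Theory Num.Theory.
Local Open Scope ring_scope.

(* A (simple) graph on the vertex set {1..n} (represented by 'I_n) is an
   irreflexive symmetric adjacency relation; {i,j} is an edge iff e i j. *)
Definition is_graph (n : nat) (e : rel 'I_n) : Prop :=
  symmetric e /\ irreflexive e.

Definition subgraph (n : nat) (G H : rel 'I_n) : Prop :=
  forall i j, G i j -> H i j.

Definition compl_graph (n : nat) (H : rel 'I_n) : rel 'I_n :=
  fun i j => (i != j) && ~~ H i j.

Definition in_S (R : realType) (n : nat) (G : rel 'I_n) (A : 'M[R]_n) : Prop :=
  A^T = A /\ (forall i j, i != j -> (A i j != 0 <-> G i j)).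

Definition in_Scl (R : realType) (n : nat) (G : rel 'I_n) (A : 'M[R]_n) : Prop :=
  A^T = A /\ (forall i j, i != j -> A i j != 0 -> G i j).

(* Strong spectral property of A with respect to H: the only real symmetric
   X in S^cl(complement of H) with zero diagonal (I o X = O) commuting with A
   is X = O. *)
Definition SSP_wrt (R : realType) (n : nat) (A : 'M[R]_n) (H : rel 'I_n) : Prop :=
  forall X : 'M[R]_n,
    in_Scl (compl_graph H) X ->
    (forall i, X i i = 0) ->
    A *m X - X *m A = 0 ->
    X = 0.

(* spec(A) = spec(B) as multisets of eigenvalues: every real number has the
   same algebraic multiplicity (root multiplicity in the characteristic
   polynomial) as an eigenvalue of A and of B. *)
Definition same_spec (R : realType) (n : nat) (A B : 'M[R]_n) : Prop :=
  forall x : R, mup x (char_poly A) = mup x (char_poly B).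

Definition is_mx_norm (R : realType) (n : nat) (N : 'M[R]_n -> R) : Prop :=
  [/\ forall A, 0 <= N A,
      forall A, N A = 0 -> A = 0,
      forall (c : R) A, N (c *: A) = `|c| * N A
    & forall A B, N (A + B) <= N A + N B].

From HB Require Import structures.
From mathcomp Require Import all_boot all_order all_algebra.
From mathcomp Require Import reals.
From mathcomp Require Import boolp classical_sets functions topology normedtype sequences.
From mathcomp Require Import interval_inference ring lra.
Import Order.TTheory GRing.Theory Num.Theory.
Import numFieldNormedType.Exports.
Local Open Scope ring_scope.

(* Let P be the orthogonal projection onto the symmetric matrices with zero diagonal
   supported off H.  SSP of A with respect to H says that Y |-> P[A,[A,Y]] is injective
   on the range of P, so L := P[A,[A,P .]] + (1 - P) is invertible with bounded inverse.
   A contraction argument then gives, for every small b = P b, a small Z with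
   Z + Z^T = - Z^T Z, i.e. Q := 1 + Z orthogonal, and P (Q^T A Q) = P A + b.  Taking b
   small and constant on the edges of H' outside H, A' := Q^T A Q is cospectral with A,
   close to A and has the required pattern; SSP is an open condition, hence holds for A'
   with respect to H, and SSP with respect to H passes to the supergraph H'. *)

Section MaxNorm.
Context {R : realDomainType}.

Lemma mx_norm_entry {m n} (x : 'M[R]_(m, n)) i j : `|x i j| <= `|x|.
Proof. by rewrite [leRHS]/Num.Def.normr /= mx_normrE; apply/bigmax_geP; right; exists (i, j). Qed.

Lemma mx_norm_le {m n} (x : 'M[R]_(m, n)) c :
  0 <= c -> (forall i j, `|x i j| <= c) -> `|x| <= c.
Proof.
by move=> c0 le_xc; rewrite /Num.Def.normr /= mx_normrE; apply/bigmax_leP; split=> // -[i j].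
Qed.

Lemma mx_norm_tr {m n} (x : 'M[R]_(m, n)) : `|x^T| = `|x|.
Proof.
apply/le_anti; rewrite !mx_norm_le // => i j; rewrite ?mxE ?mx_norm_entry //.
by have := mx_norm_entry x^T j i; rewrite mxE.
Qed.

Lemma mx_norm_mul {m n p} (x : 'M[R]_(m, n)) (y : 'M[R]_(n, p)) :
  `|x *m y| <= n%:R * `|x| * `|y|.
Proof.
apply: mx_norm_le => [|i j]; first by rewrite !mulr_ge0.
rewrite mxE; apply: le_trans (ler_norm_sum _ _ _) _.
rewrite -mulrA mulr_natl -[n in _ *+ n]card_ord -sumr_const; apply: ler_sum => k _.
by rewrite normrM ler_pM ?mx_norm_entry.
Qed.

Lemma mx_norm_mulB {m n p} (x1 x2 : 'M[R]_(m, n)) (y1 y2 : 'M[R]_(n, p)) :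
  `|x1 *m y1 - x2 *m y2| <= n%:R * (`|x1| * `|y1 - y2| + `|x1 - x2| * `|y2|).
Proof.
have -> : x1 *m y1 - x2 *m y2 = x1 *m (y1 - y2) + (x1 - x2) *m y2.
  by rewrite mulmxBr mulmxBl addrA subrK.
rewrite mulrDr !mulrA; apply: le_trans (ler_normD _ _) _.
by rewrite lerD // mx_norm_mul.
Qed.

Lemma mx_norm_mxvec {m n} (x : 'M[R]_(m, n)) : `|mxvec x| <= `|x|.
Proof.
apply: mx_norm_le => // i k; rewrite (ord1 i).
by case/mxvec_indexP: k => a b; rewrite mxvecE mx_norm_entry.
Qed.

Lemma mx_norm_vec_mx {m n} (u : 'rV[R]_(m * n)) : `|vec_mx u| <= `|u|.
Proof. by apply: mx_norm_le => // i j; rewrite mxE mx_norm_entry. Qed.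

Lemma mx_norm_congr_near_id {n} (A Z : 'M[R]_n) r :
  `|Z| <= r -> r <= 1 ->
  `|(1%:M + Z)^T *m A *m (1%:M + Z) - A| <= (2 * n%:R + n%:R ^+ 2) * `|A| * r.
Proof.
move=> Zr r_le1.
rewrite [(_ + _)^T]linearD /= trmx1 !mulmxDl !mulmxDr !mul1mx !mulmx1.
rewrite addrAC [A + _ - A]addrAC subrr add0r.
have le_AZ : `|A *m Z| <= n%:R * `|A| * r.
  by apply: le_trans (mx_norm_mul _ _) _; rewrite ler_wpM2l.
have le_ZA : `|Z^T *m A| <= n%:R * r * `|A|.
  by apply: le_trans (mx_norm_mul _ _) _; rewrite mx_norm_tr ler_wpM2r ?ler_wpM2l.
have le_ZAZ : `|Z^T *m A *m Z| <= n%:R ^+ 2 * `|A| * r.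
  apply: le_trans (mx_norm_mul _ _) _.
  have -> : n%:R ^+ 2 * `|A| * r = n%:R * (n%:R * r * `|A|) * 1 by ring.
  by rewrite ler_pM ?mulr_ge0 ?ler_wpM2l // (le_trans Zr).
apply: le_trans (ler_normD _ _) _; apply: le_trans (lerD (lexx _) (ler_normD _ _)) _.
have -> : (2 * n%:R + n%:R ^+ 2) * `|A| * r =
  n%:R * `|A| * r + (n%:R * r * `|A| + n%:R ^+ 2 * `|A| * r) by ring.
by rewrite !lerD.
Qed.

End MaxNorm.

Lemma linear_inj_bounded_inverse {R : realFieldType} {m n}
    {f : {linear 'M[R]_(m, n) -> 'M[R]_(m, n)}} :
  injective f ->
  exists g : 'M[R]_(m, n) -> 'M[R]_(m, n), exists C : R,
    [/\ 0 <= C, cancel f g, cancel g f & forall Y, `|g Y| <= C * `|Y|].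
Proof.
move=> inj_f; pose L := lin_mx f.
have L_unit : L \in unitmx.
  rewrite -row_free_unit -kermx_eq0; apply/eqP/row_matrixP => i.
  have : row i (kermx L) *m L = 0 by rewrite -row_mul mulmx_ker row0.
  rewrite mul_rV_lin row0 => /eqP; rewrite mxvec_eq0 -(linear0 f) => /eqP /inj_f.
  by move/(congr1 mxvec); rewrite vec_mxK linear0.
pose g Y := vec_mx (mxvec Y *m invmx L).
have gK : cancel g f by move=> Y; rewrite -[f _]mxvecK -mul_rV_lin mulmxKV ?mxvecK.
exists g, ((m * n)%:R * `|invmx L|); split; rewrite ?mulr_ge0 //.
- by move=> X; apply: inj_f; rewrite gK.
- move=> Y; apply: le_trans (mx_norm_vec_mx _) (le_trans (mx_norm_mul _ _) _).
  by rewrite mulrAC ler_wpM2l ?mulr_ge0 ?mx_norm_mxvec.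
Qed.

Lemma is_mx_norm_small {R : realType} {n} {N : 'M[R]_n -> R} :
  is_mx_norm N -> forall eps, 0 < eps ->
  exists2 delta, 0 < delta & forall X, `|X| < delta -> N X < eps.
Proof.
case=> N_ge0 _ NZ ND eps eps_gt0.
have N0 : N 0 = 0 by rewrite -(scale0r 0) NZ normr0 mul0r.
pose c := \sum_i \sum_j N (delta_mx i j).
have c_ge0 : 0 <= c by do 2![apply: sumr_ge0 => ? _].
have N_sum I r P (F : I -> 'M[R]_n) :
    N (\sum_(i <- r | P i) F i) <= \sum_(i <- r | P i) N (F i).
  by elim/big_ind2: _ => // [|X x Y y]; [rewrite N0 | move=> /lerD /[apply]; apply: le_trans].
have N_le X : N X <= c * `|X|.
  rewrite [X in N X]matrix_sum_delta mulr_suml; apply: le_trans (N_sum _ _ _ _) _.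
  apply: ler_sum => i _; rewrite mulr_suml; apply: le_trans (N_sum _ _ _ _) _.
  by apply: ler_sum => j _; rewrite NZ mulrC ler_wpM2l ?mx_norm_entry.
exists (eps / (c + 1)) => [|X lt_X]; first by rewrite divr_gt0 ?ltr_wpDl.
apply: le_lt_trans (N_le X) _; rewrite ltr_pdivlMr ?ltr_wpDl // in lt_X.
by apply: le_lt_trans lt_X; rewrite mulrDr mulr1 [c * _]mulrC lerDl.
Qed.

Lemma exists_small_scale {R : realFieldType} (s : seq R) :
  exists2 r : R, 0 < r <= 1 & all (fun K => r * K < 1) s.
Proof.
pose c := 1 + \sum_(K <- s) `|K|.
have c_ge1 : 1 <= c by rewrite lerDl sumr_ge0.
have c_gt0 : 0 < c by apply: lt_le_trans c_ge1.
exists c^-1; first by rewrite invr_gt0 c_gt0 invf_le1.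
apply/allP => K K_s; rewrite mulrC ltr_pdivrMr // mul1r.
apply: le_lt_trans (ler_norm K) _; rewrite /c ltr_pwDl //.
by rewrite (big_rem K) //= lerDl sumr_ge0.
Qed.

HB.instance Definition _ (R : realType) (m n : nat) := Complete.on 'M[R]_(m, n).

Section MatrixContraction.
Local Open Scope classical_set_scope.

Lemma mx_contraction_fixed_point {R : realType} {m n} (f : 'M[R]_(m, n) -> 'M[R]_(m, n))
    {r q : R} :
  0 < r -> 0 <= q < 1 ->
  (forall x, `|x| <= r -> `|f x| <= r) ->
  (forall x y, `|x| <= r -> `|y| <= r -> `|f x - f y| <= q * `|x - y|) ->
  exists2 x, `|x| <= r & x = f x.
Proof.
move=> r_gt0 /andP[q_ge0 q_lt1] f_ball f_lip.
pose U := [set x : 'M[R]_(m, n) | `|x| <= r].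
have U_closed : closed U.
  suff -> : U = closed_ball 0 r by exact: closed_ball_closed.
  by rewrite closed_ballE //; apply/funext => x; rewrite /U /closed_ball_ /= sub0r normrN.
have f_U : {homo f : x / U x} by [].
have f_contr : is_contraction (mkfun_fun f_U).
  by exists (NngNum q_ge0); split => // -[x y] [/= Ux Uy]; apply: f_lip.
have U_nonempty : U !=set0 by exists 0; rewrite /U /= normr0 ltW.
by have [x Ux fx] := banach_fixed_point f_contr U_closed U_nonempty; exists x.
Qed.

End MatrixContraction.

Lemma char_poly_similar {R : comNzRingType} {n} (A P Q : 'M[R]_n) :
  Q *m P = 1%:M -> char_poly (Q *m A *m P) = char_poly A.
Proof.
move=> QP; rewrite /char_poly /char_poly_mx !map_mxM.
set f := map_mx (@polyC R).
have fQP : f Q *m f P = 1%:M by rewrite -map_mxM QP map_mx1.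
have X_conj : ('X%:M : 'M[{poly R}]_n) = f Q *m 'X%:M *m f P.
  by rewrite -mulmxA -scalar_mxC mulmxA fQP mul1mx.
rewrite [in LHS]X_conj -mulmxBl -mulmxBr !det_mulmx mulrAC -det_mulmx fQP.
by rewrite det1 mul1r.
Qed.

Section FrobeniusInner.
Context {R : realFieldType} {m n : nat}.
Implicit Types X Y : 'M[R]_(m, n).

Definition frob_inner X Y := \tr (X^T *m Y).

Lemma frob_innerE X Y : frob_inner X Y = \sum_i \sum_j X i j * Y i j.
Proof.
rewrite /frob_inner /mxtrace exchange_big; apply: eq_bigr => j _; rewrite mxE.
by apply: eq_bigr => i _; rewrite mxE.
Qed.

Lemma frob_inner_self_eq0 X : frob_inner X X = 0 -> X = 0.
Proof.
have sq_ge0 i j : 0 <= X i j * X i j by rewrite -expr2 sqr_ge0.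
rewrite frob_innerE => /eqP; rewrite psumr_eq0 => [/allP X0|i _]; last first.
  by apply: sumr_ge0 => j _.
apply/matrixP => i j; rewrite mxE.
move/implyP: (X0 i (mem_index_enum _)) => /(_ isT).
rewrite psumr_eq0 // => /allP /(_ j (mem_index_enum _)) /implyP /(_ isT).
by rewrite mulf_eq0 orbb => /eqP.
Qed.

End FrobeniusInner.

Section ComplementProjection.
Context {R : realFieldType} {n : nat}.
Implicit Types (H : rel 'I_n) (A X Y : 'M[R]_n).

Definition compl_proj H X : 'M[R]_n :=
  \matrix_(i, j) (if compl_graph H i j then (X i j + X j i) / 2 else 0).

Definition bracket A X : 'M[R]_n := A *m X - X *m A.

Lemma compl_proj_is_linear H : linear (compl_proj H).
Proof.
move=> a X Y; apply/matrixP => i j; rewrite !mxE.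
by case: ifP => _; rewrite ?mulr0 ?addr0 //; ring.
Qed.

Lemma bracket_is_linear A : linear (bracket A).
Proof.
move=> a X Y; rewrite /bracket mulmxDr mulmxDl -!scalemxAl -!scalemxAr.
by apply/matrixP => i j; rewrite !mxE; ring.
Qed.

End ComplementProjection.

HB.instance Definition _ (R : realFieldType) n H :=
  GRing.isLinear.Build R 'M[R]_n 'M[R]_n *:%R (@compl_proj R n H) (compl_proj_is_linear H).
HB.instance Definition _ (R : realFieldType) n A :=
  GRing.isLinear.Build R 'M[R]_n 'M[R]_n *:%R (@bracket R n A) (bracket_is_linear A).

Section ComplementProjectionTheory.
Context {R : realFieldType} {n : nat}.
Implicit Types (H : rel 'I_n) (A X Y : 'M[R]_n).

Lemma compl_graph_sym {H} : symmetric H -> symmetric (compl_graph H).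
Proof. by move=> sH i j; rewrite /compl_graph eq_sym sH. Qed.

Lemma compl_proj_tr H X : symmetric H -> (compl_proj H X)^T = compl_proj H X.
Proof.
move=> sH; apply/matrixP => i j; rewrite !mxE (compl_graph_sym sH).
by case: ifP => // _; rewrite addrC.
Qed.

Lemma compl_proj_id H X : X^T = X ->
  (forall i j, ~~ compl_graph H i j -> X i j = 0) -> compl_proj H X = X.
Proof.
move=> sX supp_X; apply/matrixP => i j; rewrite mxE.
have -> : X j i = X i j by rewrite -{1}sX mxE.
by case: ifPn => [_|/supp_X ->] //; field.
Qed.

Lemma compl_proj_idem H X : symmetric H -> compl_proj H (compl_proj H X) = compl_proj H X.
Proof.
move=> sH; apply: compl_proj_id; first exact: compl_proj_tr.
by move=> i j /negbTE c; rewrite mxE c.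
Qed.

Lemma compl_proj_eq0 H X : symmetric H ->
  (forall i j, compl_graph H i j -> X i j = 0) -> compl_proj H X = 0.
Proof.
move=> sH X0; apply/matrixP => i j; rewrite !mxE.
by case: ifPn => // c; rewrite !X0 ?addr0 ?mul0r // (compl_graph_sym sH).
Qed.

Lemma compl_proj_entry H X i j : X^T = X -> compl_graph H i j ->
  compl_proj H X i j = X i j.
Proof.
move=> sX c; rewrite mxE c.
have -> : X j i = X i j by rewrite -{1}sX mxE.
by field.
Qed.

Lemma mx_norm_compl_proj H X : `|compl_proj H X| <= `|X|.
Proof.
apply: mx_norm_le => // i j; rewrite mxE; case: ifP => _; last by rewrite normr0.
rewrite normrM [`|2^-1|]ger0_norm ?invr_ge0 // ler_pdivrMr //.
have := mx_norm_entry X i j; have := mx_norm_entry X j i.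
by have := ler_normD (X i j) (X j i); lra.
Qed.

Lemma mx_norm_bracket A X : `|bracket A X| <= 2 * n%:R * `|A| * `|X|.
Proof.
apply: le_trans (ler_normB _ _) _.
have := mx_norm_mul A X; have := mx_norm_mul X A; lra.
Qed.

Lemma bracket_tr A Y : A^T = A -> Y^T = Y -> (bracket A Y)^T = - bracket A Y.
Proof. by move=> sA sY; rewrite /bracket linearB /= !trmx_mul sA sY opprB. Qed.

Lemma bracket_subl A B X : bracket A X - bracket B X = bracket (A - B) X.
Proof. by rewrite /bracket mulmxBl mulmxBr; apply/matrixP => i j; rewrite !mxE; ring. Qed.

Lemma frob_inner_bracket A X Y : A^T = A ->
  frob_inner X (bracket A Y) = frob_inner (bracket A X) Y.
Proof.
move=> sA; rewrite /frob_inner /bracket mulmxBr linearB /= [(_ - _)^T]linearB /=.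
rewrite !trmx_mul sA mulmxBl !mulmxA [RHS]linearB /=; congr (_ - _).
by rewrite mxtrace_mulC mulmxA.
Qed.

Lemma frob_inner_compl_proj H X Y : symmetric H ->
  frob_inner (compl_proj H X) Y = frob_inner X (compl_proj H Y).
Proof.
move=> sH; rewrite !frob_innerE.
have split U V : \sum_i \sum_j compl_proj H U i j * V i j =
    2^-1 * \sum_i \sum_j (if compl_graph H i j then U i j * V i j else 0) +
    2^-1 * \sum_i \sum_j (if compl_graph H i j then U j i * V i j else 0).
  rewrite !mulr_sumr -big_split; apply: eq_bigr => i _ /=.
  rewrite !mulr_sumr -big_split; apply: eq_bigr => j _ /=; rewrite mxE.
  by case: ifP => _; ring.
rewrite split (eq_bigr _ (fun i _ => eq_bigr _ (fun j _ => mulrC _ _))) split.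
congr (_ * _ + _ * _).
  by apply: eq_bigr => i _; apply: eq_bigr => j _; case: ifP; rewrite // mulrC.
rewrite exchange_big; apply: eq_bigr => i _; apply: eq_bigr => j _.
by rewrite (compl_graph_sym sH); case: ifP; rewrite // mulrC.
Qed.

End ComplementProjectionTheory.

Section SSPOperatorDef.
Context {R : realFieldType} {n : nat}.

(* On the range of [compl_proj H] this is Y |-> P[A,[A,Y]], whose kernel consists of the
   witnesses against SSP since <Y, P[A,[A,Y]]> = |[A,Y]|^2; on the complement it is the
   identity. *)
Definition ssp_op (A : 'M[R]_n) (H : rel 'I_n) (X : 'M[R]_n) :=
  compl_proj H (bracket A (bracket A (compl_proj H X))) + (X - compl_proj H X).

Lemma ssp_op_is_linear A H : linear (ssp_op A H).
Proof.
move=> a X Y; rewrite /ssp_op !linearP /=.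
by apply/matrixP => i j; rewrite !mxE; ring.
Qed.

End SSPOperatorDef.

HB.instance Definition _ (R : realFieldType) n A H :=
  GRing.isLinear.Build R 'M[R]_n 'M[R]_n *:%R (@ssp_op R n A H) (ssp_op_is_linear A H).

Section SSPOperator.
Context {R : realType} {n : nat}.
Implicit Types (H : rel 'I_n) (A B X Y : 'M[R]_n).

Lemma compl_proj_ssp_op A H X : symmetric H ->
  compl_proj H (ssp_op A H X) = compl_proj H (bracket A (bracket A (compl_proj H X))).
Proof.
by move=> sH; rewrite /ssp_op raddfD (raddfB _ X) /= !compl_proj_idem // subrr addr0.
Qed.

Lemma in_Scl_compl_proj H X : symmetric H -> in_Scl (compl_graph H) (compl_proj H X).
Proof.
move=> sH; split; first exact: compl_proj_tr.
by move=> i j _; rewrite mxE; case: ifP => //; rewrite eqxx.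
Qed.

Lemma compl_proj_diag H X i : compl_proj H X i i = 0.
Proof. by rewrite mxE /compl_graph eqxx. Qed.

Lemma compl_proj_Scl H X : in_Scl (compl_graph H) X -> (forall i, X i i = 0) ->
  compl_proj H X = X.
Proof.
move=> [sX supp_X] diag_X; apply: compl_proj_id => // i j c.
have [<-|ij] := eqVneq i j; first exact: diag_X.
by apply/eqP; apply: contraNT c; apply: supp_X.
Qed.

Lemma ssp_op_inj {A H} : A^T = A -> symmetric H -> SSP_wrt A H -> injective (ssp_op A H).
Proof.
move=> sA sH ssp; apply: raddf_inj => X /= LX0.
have PAAX : compl_proj H (bracket A (bracket A (compl_proj H X))) = 0.
  by rewrite -compl_proj_ssp_op // LX0 linear0.
have {LX0} -> : X = compl_proj H X.
  by apply/eqP; rewrite -subr_eq0 -LX0 /ssp_op PAAX add0r.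
set Y := compl_proj H X in PAAX *.
have AY0 : bracket A Y = 0.
  apply: frob_inner_self_eq0.
  rewrite -frob_inner_bracket // -[Y in frob_inner Y _]compl_proj_idem //.
  by rewrite frob_inner_compl_proj // PAAX /frob_inner mulmx0 mxtrace0.
by apply: ssp => //; [exact: in_Scl_compl_proj | exact: compl_proj_diag].
Qed.

Lemma SSP_wrt_subgraph {A H H'} : subgraph H H' -> SSP_wrt A H -> SSP_wrt A H'.
Proof.
move=> HH' ssp X [sX supp_X]; apply: ssp; split => // i j ij /(supp_X _ _ ij).
by rewrite /compl_graph ij /=; apply: contra; apply: HH'.
Qed.

Lemma SSP_wrt_open {A H} : A^T = A -> symmetric H -> SSP_wrt A H ->
  exists2 delta, 0 < delta & forall B, `|B - A| < delta -> SSP_wrt B H.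
Proof.
move=> sA sH ssp.
have [g [C [C_ge0 gK _ gC]]] := linear_inj_bounded_inverse (ssp_op_inj sA sH ssp).
pose c := 4 * n%:R ^+ 2 * `|A| * C.
have c_ge0 : 0 <= c by rewrite !mulr_ge0.
exists (c + 1)^-1 => [|B lt_BA X sclX diagX BX0]; first by rewrite invr_gt0 ltr_wpDl.
have PX : compl_proj H X = X by apply: compl_proj_Scl.
have AX : bracket A X = bracket (A - B) X by rewrite -bracket_subl [bracket B X]BX0 subr0.
have le_X : `|X| <= c * `|B - A| * `|X|.
  rewrite -{1}(gK X); apply: le_trans (gC _) _.
  rewrite /= /ssp_op PX subrr addr0.
  apply: le_trans (ler_wpM2l C_ge0 (mx_norm_compl_proj _ _)) _.
  apply: le_trans (ler_wpM2l C_ge0 (mx_norm_bracket _ _)) _.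
  have -> : c * `|B - A| * `|X| =
      C * (2 * n%:R * `|A| * (2 * n%:R * `|A - B| * `|X|)) by rewrite distrC /c; ring.
  rewrite AX; apply: ler_wpM2l => //; apply: ler_wpM2l; first by rewrite !mulr_ge0.
  exact: mx_norm_bracket.
have lt_cBA : c * `|B - A| < 1.
  rewrite -[(c + 1)^-1]div1r ltr_pdivlMr ?ltr_wpDl // in lt_BA.
  by have := normr_ge0 (B - A); nra.
by apply/eqP; rewrite -normr_le0; have := normr_ge0 X; nra.
Qed.

End SSPOperator.

Section OrthogonalPerturbation.
Context {R : realType} {n : nat}.
Context {A : 'M[R]_n} {H : rel 'I_n} {g : 'M[R]_n -> 'M[R]_n} {C : R} {b : 'M[R]_n}.
Hypotheses (sA : A^T = A) (sH : symmetric H).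
Hypotheses (gK : cancel (ssp_op A H) g) (Kg : cancel g (ssp_op A H)).
Hypotheses (C_ge0 : 0 <= C) (gC : forall Y, `|g Y| <= C * `|Y|).
Hypothesis (Pb : compl_proj H b = b).
Local Notation k := (n%:R : R).
Local Notation a := `|A|.
Implicit Types (r : R) (Z : 'M[R]_n).

Definition gram Z := Z^T *m Z.

Definition defect Z :=
  2^-1 *: compl_proj H (gram Z *m A + A *m gram Z) - compl_proj H (Z^T *m A *m Z).

(* With K := [A, P (g (b + defect Z))], which is skew, a fixed point Z = step Z
   satisfies Z + Z^T = - gram Z; and since P [A, K] = b + defect Z, the defect cancels
   the projection of the terms of (1 + Z)^T A (1 + Z) that are quadratic in Z. *)
Definition step Z := - (2^-1 *: gram Z) + bracket A (compl_proj H (g (b + defect Z))).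

Lemma mx_norm_gramB {r Z1 Z2} : `|Z1| <= r -> `|Z2| <= r ->
  `|gram Z1 - gram Z2| <= 2 * k * r * `|Z1 - Z2|.
Proof.
move=> Z1r Z2r; apply: le_trans (mx_norm_mulB _ _ _ _) _.
rewrite -linearB /= !mx_norm_tr.
have -> : 2 * k * r * `|Z1 - Z2| = k * (r * `|Z1 - Z2| + `|Z1 - Z2| * r) by ring.
by rewrite ler_wpM2l // lerD ?ler_wpM2r ?ler_wpM2l.
Qed.

Lemma mx_norm_congrB {r Z1 Z2} : `|Z1| <= r -> `|Z2| <= r ->
  `|Z1^T *m A *m Z1 - Z2^T *m A *m Z2| <= 2 * k ^+ 2 * a * r * `|Z1 - Z2|.
Proof.
move=> Z1r Z2r; apply: le_trans (mx_norm_mulB _ _ _ _) _.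
rewrite -mulmxBl -linearB /=.
have le_Z1A : `|Z1^T *m A| <= k * r * a.
  by apply: le_trans (mx_norm_mul _ _) _; rewrite mx_norm_tr ler_wpM2r ?ler_wpM2l.
have le_DA : `|(Z1 - Z2)^T *m A| <= k * `|Z1 - Z2| * a.
  by apply: le_trans (mx_norm_mul _ _) _; rewrite mx_norm_tr.
have -> : 2 * k ^+ 2 * a * r * `|Z1 - Z2| =
  k * (k * r * a * `|Z1 - Z2| + k * `|Z1 - Z2| * a * r) by ring.
by rewrite ler_wpM2l // lerD ?ler_pM.
Qed.

Lemma mx_norm_defectB {r Z1 Z2} : `|Z1| <= r -> `|Z2| <= r ->
  `|defect Z1 - defect Z2| <= 4 * k ^+ 2 * a * r * `|Z1 - Z2|.
Proof.
move=> Z1r Z2r; set d := `|Z1 - Z2|.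
have le_gram := mx_norm_gramB Z1r Z2r.
have le_sym : `|(gram Z1 *m A + A *m gram Z1) - (gram Z2 *m A + A *m gram Z2)| <=
    2 * k * a * (2 * k * r * d).
  rewrite opprD addrACA -mulmxBl -mulmxBr; apply: le_trans (ler_normD _ _) _.
  apply: le_trans (lerD (mx_norm_mul _ _) (mx_norm_mul _ _)) _.
  have -> : k * `|gram Z1 - gram Z2| * a + k * a * `|gram Z1 - gram Z2| =
    2 * k * a * `|gram Z1 - gram Z2| by ring.
  by rewrite ler_wpM2l ?mulr_ge0.
rewrite /defect opprD addrACA opprK -scalerBr [- _ + _]addrC -!raddfB /=.
apply: le_trans (ler_normD _ _) _; rewrite normrZ ger0_norm ?invr_ge0 //.
have := le_trans (mx_norm_compl_proj H _) le_sym.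
have := le_trans (mx_norm_compl_proj H _) (mx_norm_congrB Z2r Z1r).
rewrite distrC -/d; nra.
Qed.

Lemma step_lipschitz {r Z1 Z2} : `|Z1| <= r -> `|Z2| <= r ->
  `|step Z1 - step Z2| <= r * (k + 8 * k ^+ 3 * a ^+ 2 * C) * `|Z1 - Z2|.
Proof.
move=> Z1r Z2r; set d := `|Z1 - Z2|.
have gB Y1 Y2 : g (Y1 - Y2) = g Y1 - g Y2.
  by rewrite -{1}(Kg Y1) -{1}(Kg Y2) -linearB /= gK.
rewrite /step opprD addrACA -opprD -scalerBr -!raddfB /= -gB.
rewrite [- (b + _)]opprD addrACA subrr add0r.
apply: le_trans (ler_normD _ _) _; rewrite normrN normrZ ger0_norm ?invr_ge0 //.
have le_g : `|g (defect Z1 - defect Z2)| <= C * (4 * k ^+ 2 * a * r * d).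
  by apply: le_trans (gC _) _; rewrite ler_wpM2l // mx_norm_defectB.
have le_br : `|bracket A (compl_proj H (g (defect Z1 - defect Z2)))| <=
    2 * k * a * (C * (4 * k ^+ 2 * a * r * d)).
  apply: le_trans (mx_norm_bracket _ _) _; rewrite ler_wpM2l ?mulr_ge0 //.
  exact: le_trans (mx_norm_compl_proj H _) le_g.
have -> : r * (k + 8 * k ^+ 3 * a ^+ 2 * C) * d =
    2^-1 * (2 * k * r * d) + 2 * k * a * (C * (4 * k ^+ 2 * a * r * d)) by field.
by rewrite lerD // ler_wpM2l ?invr_ge0 // mx_norm_gramB.
Qed.

Lemma step_ball r Z : 0 <= r -> r * (k + 8 * k ^+ 3 * a ^+ 2 * C) <= 2^-1 ->
  2 * k * a * C * `|b| <= r / 2 -> `|Z| <= r -> `|step Z| <= r.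
Proof.
move=> r_ge0 rK bK Zr.
have step0 : step 0 = bracket A (compl_proj H (g b)).
  by rewrite /step /defect /gram trmx0 !mul0mx !mulmx0 !add0r !linear0 !addr0 add0r.
have le_step0 : `|step 0| <= r / 2.
  rewrite step0; apply: le_trans (mx_norm_bracket _ _) _; apply: le_trans bK.
  rewrite -!mulrA !ler_wpM2l //.
  exact: le_trans (mx_norm_compl_proj H _) (gC _).
have Z0r : `|0 : 'M[R]_n| <= r by rewrite normr0.
have := step_lipschitz Zr Z0r; rewrite subr0 => le_diff.
rewrite -[step Z](subrK (step 0)); apply: le_trans (ler_normD _ _) _.
have : r * (k + 8 * k ^+ 3 * a ^+ 2 * C) * `|Z| <= r * 2^-1.
  by rewrite mulrC ler_pM // mulr_ge0 // addr_ge0 // !mulr_ge0.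
by have := normr_ge0 Z; lra.
Qed.

Lemma step_fixed_tr {Z} : Z = step Z ->
  Z^T = - (2^-1 *: gram Z) - bracket A (compl_proj H (g (b + defect Z))).
Proof.
move=> {1}->; rewrite /step linearD linearN linearZ /= {1}/gram trmx_mul trmxK.
by rewrite bracket_tr // compl_proj_tr.
Qed.

Lemma step_fixed_orthogonal Z : Z = step Z -> (1%:M + Z)^T *m (1%:M + Z) = 1%:M.
Proof.
move=> fixZ; have ZT := step_fixed_tr fixZ.
have ZZT : Z + Z^T = - gram Z.
  rewrite ZT {1}fixZ /step; move: (gram Z) (bracket _ _) => S K.
  by apply/matrixP => i j; rewrite !mxE; field.
rewrite [(_ + _)^T]linearD /= trmx1 mulmxDl !mulmxDr !mul1mx mulmx1.
by rewrite addrA -(addrA 1%:M) ZZT -/(gram Z) subrK.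
Qed.

Lemma step_fixed_compl_proj Z : Z = step Z ->
  compl_proj H ((1%:M + Z)^T *m A *m (1%:M + Z)) = compl_proj H A + b.
Proof.
move=> fixZ; have ZT := step_fixed_tr fixZ.
set w := b + defect Z in ZT; set K := bracket A _ in ZT.
have PAK : compl_proj H (bracket A K) = w.
  rewrite -compl_proj_ssp_op // Kg /w /defect raddfD raddfB /= linearZ /=.
  by rewrite !compl_proj_idem // Pb.
have AZ : A *m Z + Z^T *m A = - (2^-1 *: (gram Z *m A + A *m gram Z)) + bracket A K.
  rewrite {1}fixZ ZT /step -/w -/K /bracket mulmxDr mulmxBl mulmxN mulNmx.
  rewrite -scalemxAr -scalemxAl; move: (A *m gram Z) (gram Z *m A) (A *m K) (K *m A).
  by move=> AS SA AK KA; apply/matrixP => i j; rewrite !mxE; ring.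
rewrite [(_ + _)^T]linearD /= trmx1 !mulmxDl !mulmxDr !mul1mx !mulmx1.
rewrite addrA -(addrA A) AZ; move: (bracket A K) PAK => BK; rewrite /w /defect.
move: (gram Z *m A + A *m gram Z) (Z^T *m A *m Z) => S q PBK.
rewrite !raddfD raddfN /= linearZ /= PBK.
move: (compl_proj H A) (compl_proj H S) (compl_proj H q) => PA PS Pq.
by apply/matrixP => i j; rewrite !mxE; field.
Qed.

Lemma exists_orthogonal_perturbation r : 0 < r ->
  r * (k + 8 * k ^+ 3 * a ^+ 2 * C) <= 2^-1 -> 2 * k * a * C * `|b| <= r / 2 ->
  exists2 Z, `|Z| <= r & ((1%:M + Z)^T *m (1%:M + Z) = 1%:M /\
    compl_proj H ((1%:M + Z)^T *m A *m (1%:M + Z)) = compl_proj H A + b).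
Proof.
move=> r_gt0 rL bK.
have rL_ge0 : 0 <= r * (k + 8 * k ^+ 3 * a ^+ 2 * C).
  by apply: mulr_ge0 (ltW r_gt0) _; rewrite addr_ge0 // !mulr_ge0.
have rL_lt1 : r * (k + 8 * k ^+ 3 * a ^+ 2 * C) < 1.
  by apply: le_lt_trans rL _; rewrite invf_lt1 // ltr1n.
have [Z Zr fixZ] := mx_contraction_fixed_point step r_gt0 (introT andP (conj rL_ge0 rL_lt1))
  (fun Z => step_ball r Z (ltW r_gt0) rL bK) (fun Z1 Z2 => step_lipschitz).
by exists Z => //; split; [exact: step_fixed_orthogonal | exact: step_fixed_compl_proj].
Qed.

End OrthogonalPerturbation.

Lemma ssp_orthogonal_perturbation {R : realType} {n} {A : 'M[R]_n} {H : rel 'I_n} :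
  A^T = A -> symmetric H -> SSP_wrt A H ->
  forall delta, 0 < delta -> exists2 beta, 0 < beta &
  forall b, compl_proj H b = b -> `|b| <= beta ->
  exists Q : 'M[R]_n, [/\ Q^T *m Q = 1%:M, `|Q^T *m A *m Q - A| < delta &
    compl_proj H (Q^T *m A *m Q) = compl_proj H A + b].
Proof.
move=> sA sH ssp delta delta_gt0.
have [g [C [C_ge0 gK Kg gC]]] := linear_inj_bounded_inverse (ssp_op_inj sA sH ssp).
set k : R := n%:R; set a := `|A|.
have k_ge0 : 0 <= k := ler0n _ _.
have a_ge0 : 0 <= a := normr_ge0 A.
have [r /andP[r_gt0 r_le1]] := exists_small_scale
  [:: 2 * (k + 8 * k ^+ 3 * a ^+ 2 * C); (2 * k + k ^+ 2) * a / delta].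
rewrite /= andbT => /andP[rL rK].
have c_gt0 : 0 < 2 * k * a * C + 1 by rewrite (lt_le_trans ltr01) // lerDr !mulr_ge0.
exists (r / (2 * (2 * k * a * C + 1))) => [|b Pb b_le]; first by rewrite !divr_gt0 ?mulr_gt0.
have rL' : r * (k + 8 * k ^+ 3 * a ^+ 2 * C) <= 2^-1 by lra.
have bK : 2 * k * a * C * `|b| <= r / 2.
  apply: le_trans (ler_wpM2l _ b_le) _; first by rewrite !mulr_ge0.
  have -> : r / 2 = 2 * k * a * C * (r / (2 * (2 * k * a * C + 1))) +
    r / (2 * (2 * k * a * C + 1)) by field; rewrite gt_eqF.
  by rewrite lerDl divr_ge0 ?mulr_ge0 ?ltW.
have [Z Zr [QQ PQ]] := exists_orthogonal_perturbation sA sH gK Kg C_ge0 gC Pb _ r_gt0 rL' bK.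
exists (1%:M + Z); split => //.
apply: le_lt_trans (mx_norm_congr_near_id A Z r Zr r_le1) _.
by move: rK; rewrite mulrA [r * _]mulrC ltr_pdivrMr // mul1r.
Qed.

Theorem theorem3p4 (R : realType) (n : nat) (N : 'M[R]_n -> R)
    (G H H' : rel 'I_n) (A : 'M[R]_n) :
  is_mx_norm N ->
  is_graph G -> is_graph H -> is_graph H' ->
  subgraph G H -> subgraph H H' ->
  in_S G A -> SSP_wrt A H ->
  forall eps : R, 0 < eps ->
  exists A' : 'M[R]_n,
    [/\ in_Scl H' A',
        same_spec A A',
        N (A - A') < eps,
        SSP_wrt A' H'
      & forall i j, H' i j -> ~~ H i j -> A' i j != 0].
Proof.
move=> normN _ [sH _] [sH' irrH'] GH HH' [sA A_G] ssp eps eps_gt0.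
have [dN dN_gt0 N_small] := is_mx_norm_small normN eps eps_gt0.
have [dS dS_gt0 ssp_near] := SSP_wrt_open sA sH ssp.
have d_gt0 : 0 < Num.min dN dS by rewrite lt_min dN_gt0.
have [beta beta_gt0 perturb] := ssp_orthogonal_perturbation sA sH ssp _ d_gt0.
pose b := \matrix_(i, j) (if H' i j && ~~ H i j then beta else 0).
have Pb : compl_proj H b = b.
  apply: compl_proj_id => [|i j]; first by apply/matrixP => i j; rewrite !mxE sH sH'.
  rewrite mxE /compl_graph; case: eqVneq => [-> _|_ /negbNE ->]; last by rewrite andbF.
  by rewrite irrH'.
have b_le : `|b| <= beta.
  apply: mx_norm_le => [|i j]; first exact: ltW.
  by rewrite mxE; case: ifP => _; rewrite ?normr0 ?gtr0_norm // ltW.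
have [Q [QQ dQ PQ]] := perturb b Pb b_le; set A' := Q^T *m A *m Q in dQ PQ *.
have PA : compl_proj H A = 0.
  apply: compl_proj_eq0 => // i j /andP[ij nHij]; apply/eqP.
  by apply: contraNT nHij => /(A_G _ _ ij) /GH.
have sA' : A'^T = A' by rewrite /A' !trmx_mul trmxK sA mulmxA.
have A'E i j : compl_graph H i j -> A' i j = b i j.
  by move=> c; rewrite -(compl_proj_entry _ _ _ _ sA' c) PQ PA add0r.
move: dQ; rewrite lt_min => /andP[dQN dQS].
exists A'; split.
- split => // i j ij; case Hij : (H i j); first by move=> _; exact: HH'.
  by rewrite A'E /compl_graph ?ij ?Hij // mxE Hij andbT; case: (H' i j); rewrite ?eqxx.
- by move=> x; rewrite /A' char_poly_similar.
- by rewrite N_small // distrC.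
- exact: SSP_wrt_subgraph HH' (ssp_near _ dQS).
- move=> i j Hij' nHij; have ij : i != j by apply: contraTneq Hij' => ->; rewrite irrH'.
  by rewrite A'E /compl_graph ?ij ?nHij // mxE Hij' nHij gt_eqF.
Qed.
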